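(* Every topos is strongly amendable.
   Context: A category is amendable if for every morphism $t_L : L \to L'$ there is a factorization $t_L = \beta \circ t_L'$ with $t_L' : L \rightarrowtail L''$ mono and $\beta : L'' \to L'$ such that for every factorization $t_L = \alpha \circ m$ with $m : L \rightarrowtail G_L$ mono and $\alpha : G_L \to L'$ there exists $\alpha' : G_L \to L''$ with $\alpha' \circ m = t_L'$ and $\beta \circ \alpha' = \alpha$. It is strongly amendable if the factorization $(t_L',\beta)$ can be chosen so that moreover, for every such $(m,\alpha)$, the corresponding $\alpha'$ can be chosen so that $L \xleftarrow{1_L} L \xrightarrow{m} G_L$ is a pullback of $L \xrightarrow{t_L'} L'' \xleftarrow{\alpha'} G_L$. *)

Set Implicit Arguments.
Unset Strict Implicit.

Record Category : Type := {
  Ob :> Type;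
  Hom : Ob -> Ob -> Type;
  idm : forall A : Ob, Hom A A;
  comp : forall A B C : Ob, Hom B C -> Hom A B -> Hom A C;
  comp_assoc : forall (A B C D : Ob) (h : Hom C D) (g : Hom B C) (f : Hom A B),
      comp h (comp g f) = comp (comp h g) f;
  comp_id_l : forall (A B : Ob) (f : Hom A B), comp (idm B) f = f;
  comp_id_r : forall (A B : Ob) (f : Hom A B), comp f (idm A) = f
}.

Arguments Hom {c} _ _.
Arguments idm {c} _.
Arguments comp {c A B C} _ _.

Notation "g \o f" := (comp g f) (at level 40, left associativity).

Section Basics.
Variable C : Category.

Definition mono {A B : C} (m : Hom A B) : Prop :=
  forall (X : C) (f g : Hom X A), m \o f = m \o g -> f = g.

Definition is_pullback {A B Z P : C} (f : Hom A Z) (g : Hom B Z)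
    (p : Hom P A) (q : Hom P B) : Prop :=
  f \o p = g \o q /\
  forall (X : C) (x : Hom X A) (y : Hom X B), f \o x = g \o y ->
    exists! h : Hom X P, p \o h = x /\ q \o h = y.

Definition is_terminal (T : C) : Prop :=
  forall X : C, exists! f : Hom X T, True.

Definition is_product {A B P : C} (p1 : Hom P A) (p2 : Hom P B) : Prop :=
  forall (X : C) (f : Hom X A) (g : Hom X B),
    exists! h : Hom X P, p1 \o h = f /\ p2 \o h = g.

Definition has_finite_limits : Prop :=
  (exists T : C, is_terminal T) /\
  (forall (A B Z : C) (f : Hom A Z) (g : Hom B Z),
     exists (P : C) (p : Hom P A) (q : Hom P B), is_pullback f g p q).

Definition has_binary_products : Prop :=
  forall A B : C, exists (P : C) (p1 : Hom P A) (p2 : Hom P B), is_product p1 p2.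

(** Exponentials: for all B, Z there is an object E with a product
    E x B (projections e1, e2) and an evaluation ev : E x B -> Z such that
    for every product A x B (projections a1, a2) and every f : A x B -> Z
    there is a unique g : A -> E with ev o (g x 1_B) = f. *)
Definition has_exponentials : Prop :=
  forall B Z : C, exists (E P : C) (e1 : Hom P E) (e2 : Hom P B) (ev : Hom P Z),
    is_product e1 e2 /\
    forall (A Q : C) (a1 : Hom Q A) (a2 : Hom Q B), is_product a1 a2 ->
      forall f : Hom Q Z,
        exists! g : Hom A E, exists h : Hom Q P,
          e1 \o h = g \o a1 /\ e2 \o h = a2 /\ ev \o h = f.

Definition cartesian_closed : Prop :=
  (exists T : C, is_terminal T) /\ has_binary_products /\ has_exponentials.

Definition is_subobject_classifier (One Omega : C) (tru : Hom One Omega) : Prop :=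
  is_terminal One /\
  forall (U X : C) (m : Hom U X), mono m ->
    exists! chi : Hom X Omega,
      forall bang : Hom U One, is_pullback chi tru m bang.

Definition is_topos : Prop :=
  has_finite_limits /\ cartesian_closed /\
  exists (One Omega : C) (tru : Hom One Omega), is_subobject_classifier tru.

Definition amendable : Prop :=
  forall (L L' : C) (tL : Hom L L'),
    exists (L'' : C) (tL' : Hom L L'') (beta : Hom L'' L'),
      mono tL' /\ tL = beta \o tL' /\
      forall (GL : C) (m : Hom L GL) (alpha : Hom GL L'),
        mono m -> tL = alpha \o m ->
        exists alpha' : Hom GL L'',
          alpha' \o m = tL' /\ beta \o alpha' = alpha.

Definition strongly_amendable : Prop :=
  forall (L L' : C) (tL : Hom L L'),
    exists (L'' : C) (tL' : Hom L L'') (beta : Hom L'' L'),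
      mono tL' /\ tL = beta \o tL' /\
      forall (GL : C) (m : Hom L GL) (alpha : Hom GL L'),
        mono m -> tL = alpha \o m ->
        exists alpha' : Hom GL L'',
          alpha' \o m = tL' /\ beta \o alpha' = alpha /\
          is_pullback tL' alpha' (idm L) m.

End Basics.

From Stdlib Require Import Setoid.

Set Implicit Arguments.
Unset Strict Implicit.

(* In a topos, the singleton map [s : L -> P L] into the power object has the
   property that every mono [m : L >-> G] is a pullback of [s] along the map
   [G -> P L] sending [g] to the fibre [m^-1 {g}].  Given such an [s], factor
   [t : L -> L'] as [<s, t> : L >-> P L x L'] followed by the projection; for
   [t = alpha o m] the required comparison map is [<m^-1 {-}, alpha>], and the
   pullback square is inherited from that of [s]. *)

Section CategoryFacts.
Variable C : Category.

Lemma product_hom_ext (A B P : C) (p1 : Hom P A) (p2 : Hom P B) :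
  is_product p1 p2 -> forall (X : C) (f g : Hom X P),
  p1 \o f = p1 \o g -> p2 \o f = p2 \o g -> f = g.
Proof.
  intros Hp X f g H1 H2.
  destruct (Hp X (p1 \o g) (p2 \o g)) as [h [_ Hh]].
  rewrite <- (Hh f) by auto. apply Hh; auto.
Qed.

Lemma terminal_hom_ext (One : C) :
  is_terminal One -> forall (X : C) (f g : Hom X One), f = g.
Proof.
  intros HOne X f g. destruct (HOne X) as [h [_ Hh]].
  rewrite <- (Hh f I). apply Hh; auto.
Qed.

Lemma mono_idm (L : C) : mono (idm L).
Proof. intros X f g H. rewrite !comp_id_l in H. exact H. Qed.

Lemma mono_of_comp_mono (A B Z : C) (f : Hom A B) (g : Hom B Z) :
  mono (g \o f) -> mono f.
Proof.
  intros Hgf X x y Hxy. apply Hgf.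
  rewrite <- !comp_assoc, Hxy. reflexivity.
Qed.

Lemma pullback_mono_of_terminal (A B Z P : C) (f : Hom A Z) (g : Hom B Z)
    (p : Hom P A) (q : Hom P B) :
  is_terminal B -> is_pullback f g p q -> mono p.
Proof.
  intros HB [Hsq Hpb] X x y Hxy.
  destruct (Hpb X (p \o y) (q \o y)) as [h [_ Hh]].
  { rewrite !comp_assoc, Hsq. reflexivity. }
  rewrite <- (Hh x), <- (Hh y); auto.
  split; [exact Hxy | apply terminal_hom_ext; exact HB].
Qed.

Definition classifies_monos_from (L P : C) (s : Hom L P) : Prop :=
  forall (G : C) (m : Hom L G), mono m ->
    exists psi : Hom G P, is_pullback s psi (idm L) m.

Lemma classifies_monos_from_mono (L P : C) (s : Hom L P) :
  classifies_monos_from s -> mono s.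
Proof.
  intros Hs X x y Hxy.
  destruct (Hs L (idm L)) as [psi [Hsq Hpb]]; [apply mono_idm |].
  rewrite comp_id_r, comp_id_r in Hsq. subst psi.
  destruct (Hpb X x y Hxy) as [h [[Hx Hy] _]].
  rewrite comp_id_l in Hx, Hy. congruence.
Qed.

Theorem strongly_amendable_of_mono_classifiers :
  has_binary_products C ->
  (forall L : C, exists (P : C) (s : Hom L P), classifies_monos_from s) ->
  strongly_amendable C.
Proof.
  intros Hprod Hcls L L' tL.
  destruct (Hcls L) as [P [s Hs]].
  destruct (Hprod P L') as [PL' [r1 [r2 Hr]]].
  destruct (Hr L s tL) as [t' [[Ht1 Ht2] _]].
  exists PL', t', r2. split; [| split].
  - apply (mono_of_comp_mono (g := r1)). rewrite Ht1.
    exact (classifies_monos_from_mono Hs).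
  - symmetry. exact Ht2.
  - intros G m alpha Hm Halpha.
    destruct (Hs G m Hm) as [psi [Hsq Hpb]].
    rewrite comp_id_r in Hsq.
    destruct (Hr G psi alpha) as [a' [[Ha1 Ha2] _]].
    assert (Ha'm : a' \o m = t').
    { apply (product_hom_ext Hr).
      - rewrite comp_assoc, Ha1, Ht1. symmetry. exact Hsq.
      - rewrite comp_assoc, Ha2, Ht2. symmetry. exact Halpha. }
    exists a'. split; [exact Ha'm | split; [exact Ha2 | split]].
    + rewrite comp_id_r. symmetry. exact Ha'm.
    + intros X x y Hxy. apply Hpb.
      rewrite <- Ht1, <- Ha1, <- !comp_assoc, Hxy. reflexivity.
Qed.

End CategoryFacts.

Section PowerObject.
Variables (C : Category) (One Omega : C) (tru : Hom One Omega).
Hypothesis Hsoc : is_subobject_classifier tru.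
Hypothesis Hpb : forall (A B Z : C) (f : Hom A Z) (g : Hom B Z),
  exists (P : C) (p : Hom P A) (q : Hom P B), is_pullback f g p q.
Hypothesis Hprod : has_binary_products C.

Let HOne : is_terminal One := proj1 Hsoc.

Lemma classifying_map_ext (Z : C) (c1 c2 : Hom Z Omega) :
  (forall (T : C) (w : Hom T Z) (b : Hom T One),
     c1 \o w = tru \o b <-> c2 \o w = tru \o b) ->
  c1 = c2.
Proof.
  intros Hc.
  destruct (Hpb c1 tru) as [P [p [q Hpq]]].
  assert (Hp : mono p) by exact (pullback_mono_of_terminal HOne Hpq).
  destruct (proj2 Hsoc _ _ p Hp) as [chi [_ Hchi]].
  assert (Hpq2 : is_pullback c2 tru p q).
  { destruct Hpq as [Hsq Hu]. split.
    - apply Hc. exact Hsq.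
    - intros X x y Hxy. apply Hu. apply Hc. exact Hxy. }
  transitivity chi; [symmetry |]; apply Hchi; intros bang;
    rewrite (terminal_hom_ext HOne bang q); assumption.
Qed.

Variable L : C.
Variables (PL PLxL : C) (e1 : Hom PLxL PL) (e2 : Hom PLxL L) (ev : Hom PLxL Omega).
Hypothesis He : is_product e1 e2.
Hypothesis Hexp : forall (A Q : C) (a1 : Hom Q A) (a2 : Hom Q L), is_product a1 a2 ->
  forall f : Hom Q Omega,
    exists! g : Hom A PL, exists h : Hom Q PLxL,
      e1 \o h = g \o a1 /\ e2 \o h = a2 /\ ev \o h = f.

(* [phi x] is the fibre [m^-1 {x}], tested on generalized elements: [u] is a
   point [(phi x, y)] of [PL x L], and [ev o u] says [y] lies in [phi x]. *)
Definition names_fibres (X : C) (m : Hom L X) (phi : Hom X PL) : Prop :=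
  forall (T : C) (x : Hom T X) (y : Hom T L) (u : Hom T PLxL) (b : Hom T One),
    e1 \o u = phi \o x -> e2 \o u = y -> (ev \o u = tru \o b <-> x = m \o y).

Lemma names_fibres_exists (X : C) (m : Hom L X) : exists phi, names_fibres m phi.
Proof.
  (* [phi] is the transpose of the characteristic map of the graph [<m, 1>]. *)
  destruct (Hprod X L) as [XL [q1 [q2 Hq]]].
  destruct (Hq L m (idm L)) as [k [[Hk1 Hk2] _]].
  assert (Hk : mono k).
  { apply (mono_of_comp_mono (g := q2)). rewrite Hk2. apply mono_idm. }
  destruct (proj2 Hsoc _ _ k Hk) as [chi [Hchi _]].
  destruct (Hexp Hq chi) as [phi [[h [Hh1 [Hh2 Hh3]]] _]].
  exists phi. intros T x y u b Hu1 Hu2.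
  destruct (Hq T x y) as [w [[Hw1 Hw2] _]].
  assert (Hu : u = h \o w).
  { apply (product_hom_ext He).
    - rewrite Hu1, comp_assoc, Hh1, <- comp_assoc, Hw1. reflexivity.
    - rewrite Hu2, comp_assoc, Hh2, Hw2. reflexivity. }
  rewrite Hu, comp_assoc, Hh3.
  destruct (HOne L) as [bL _].
  destruct (Hchi bL) as [Hsq Hu_pb].
  split.
  - intros Hw. destruct (Hu_pb T w b Hw) as [j [[Hj1 Hj2] _]].
    assert (Hy : y = j)
      by (rewrite <- Hw2, <- Hj1, comp_assoc, Hk2, comp_id_l; reflexivity).
    subst j. rewrite <- Hw1, <- Hj1, comp_assoc, Hk1. reflexivity.
  - intros Hx.
    assert (Hw : w = k \o y).
    { apply (product_hom_ext Hq).
      - rewrite Hw1, comp_assoc, Hk1. exact Hx.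
      - rewrite Hw2, comp_assoc, Hk2, comp_id_l. reflexivity. }
    rewrite Hw, comp_assoc, Hsq, <- comp_assoc.
    f_equal. apply (terminal_hom_ext HOne).
Qed.

Lemma names_fibres_unique (X : C) (m : Hom L X) (phi1 phi2 : Hom X PL) :
  names_fibres m phi1 -> names_fibres m phi2 -> phi1 = phi2.
Proof.
  intros H1 H2.
  destruct (Hprod X L) as [XL [c1 [c2 Hc]]].
  destruct (He (phi1 \o c1) c2) as [h1 [[Ha1 Ha2] _]].
  destruct (He (phi2 \o c1) c2) as [h2 [[Hb1 Hb2] _]].
  assert (Hev : ev \o h1 = ev \o h2).
  { apply classifying_map_ext. intros T w b. rewrite <- !comp_assoc.
    rewrite (H1 T (c1 \o w) (c2 \o w) (h1 \o w) b),
            (H2 T (c1 \o w) (c2 \o w) (h2 \o w) b);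
      rewrite ?comp_assoc, ?Ha1, ?Ha2, ?Hb1, ?Hb2; reflexivity. }
  destruct (Hexp Hc (ev \o h1)) as [g [_ Hg]].
  rewrite <- (Hg phi1), <- (Hg phi2); eauto.
Qed.

Lemma names_fibres_comp_mono (X : C) (m : Hom L X) (phi : Hom X PL) :
  mono m -> names_fibres m phi -> names_fibres (idm L) (phi \o m).
Proof.
  intros Hm Hphi T x y u b Hu1 Hu2. rewrite comp_id_l.
  rewrite <- comp_assoc in Hu1.
  rewrite (Hphi T (m \o x) y u b Hu1 Hu2).
  split; [apply Hm | intros ->; reflexivity].
Qed.

Lemma names_fibres_pullback (X : C) (m : Hom L X) (phi : Hom X PL) (s : Hom L PL) :
  mono m -> names_fibres m phi -> names_fibres (idm L) s ->
  is_pullback s phi (idm L) m.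
Proof.
  intros Hm Hphi Hs.
  assert (Hphim : phi \o m = s)
    by exact (names_fibres_unique (names_fibres_comp_mono Hm Hphi) Hs).
  split; [rewrite comp_id_r; symmetry; exact Hphim |].
  intros T y x Hxy.
  assert (Hx : x = m \o y).
  { destruct (He (s \o y) y) as [u [[Hu1 Hu2] _]].
    destruct (HOne T) as [b _].
    apply (Hphi T x y u b); [congruence | exact Hu2 |].
    apply (Hs T y y u b Hu1 Hu2). rewrite comp_id_l. reflexivity. }
  exists y. split; [split; [apply comp_id_l | symmetry; exact Hx] |].
  intros h [Hh _]. rewrite comp_id_l in Hh. symmetry. exact Hh.
Qed.

Lemma singleton_classifies_monos : exists s : Hom L PL, classifies_monos_from s.
Proof.
  destruct (names_fibres_exists (idm L)) as [s Hs].
  exists s. intros G m Hm.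
  destruct (names_fibres_exists m) as [phi Hphi].
  exists phi. exact (names_fibres_pullback Hm Hphi Hs).
Qed.

End PowerObject.

Lemma topos_mono_classifiers (C : Category) :
  is_topos C -> forall L : C, exists (P : C) (s : Hom L P), classifies_monos_from s.
Proof.
  intros [[_ Hpb] [[_ [Hprod Hexp]] [One [Omega [tru Hsoc]]]]] L.
  destruct (Hexp L Omega) as [PL [PLxL [e1 [e2 [ev [He Hev]]]]]].
  exists PL. exact (singleton_classifies_monos Hsoc Hpb Hprod He Hev).
Qed.

Theorem corollary2 : forall C : Category, is_topos C -> strongly_amendable C.
Proof.
  intros C HC.
  assert (Hprod : has_binary_products C)
    by (destruct HC as [_ [[_ [Hprod _]] _]]; exact Hprod).
  exact (strongly_amendable_of_mono_classifiers Hprod (topos_mono_classifiers HC)).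
Qed.
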